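(* With the matrices defined in the context, let $S_N=\mathbf{B}\mathbf{A_N}^{-1}\mathbf{B}^T$ and $S_D=\mathbf{B}\mathbf{A_D}^{-1}\mathbf{B}^T$. Define $K_1,K_2\in\mathbb{R}^{r\times r}$ by $$K_1=\mathbf{U}\Big(\tfrac{h^2}{2}I_{2n(n-1)}+(\mathbf{B}^T\mathbf{B})^\dagger+(\mathbf{C}^T\mathbf{C})^\dagger\Big)\mathbf{U}^T,\qquad K_2=\mathbf{U}\Big(\tfrac{h^2}{2}I_{2n(n-1)}+(\mathbf{C}^T\mathbf{C})^\dagger\Big)\mathbf{U}^T .$$ Then $K_1,K_2$ are invertible and $$S_D=S_N-(\mathbf{U}\mathbf{B}^\dagger)^T K_1^{-1}(\mathbf{U}\mathbf{B}^\dagger),\qquad S_D^\dagger=S_N^\dagger+(\mathbf{U}\mathbf{B}^\dagger)^T K_2^{-1}(\mathbf{U}\mathbf{B}^\dagger).$$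
   Context: Fix an integer $n\ge 2$ and set $h=1/n$. Let $I_m$ denote the $m\times m$ identity matrix and $\otimes$ the Kronecker product. Let $\mathrm{B}\in\mathbb{R}^{n\times(n-1)}$ be $\mathrm{B}=\frac1h M$, where $M_{i,i}=1$ and $M_{i+1,i}=-1$ for $1\le i\le n-1$, all other entries $0$. Define $\mathrm{B}^u_x=I_n\otimes \mathrm{B}$, $\mathrm{B}^v_y=\mathrm{B}\otimes I_n$, $\mathrm{B}^q_x=I_{n-1}\otimes\mathrm{B}$, $\mathrm{B}^q_y=\mathrm{B}\otimes I_{n-1}$. Let $\mathbf{B}=\begin{bmatrix}-\mathrm{B}^u_x & -\mathrm{B}^v_y\end{bmatrix}\in\mathbb{R}^{n^2\times 2n(n-1)}$ and $\mathbf{C}=\begin{bmatrix}-(\mathrm{B}^q_y)^T & (\mathrm{B}^q_x)^T\end{bmatrix}\in\mathbb{R}^{(n-1)^2\times 2n(n-1)}$, and let $\mathbf{A_N}=\mathbf{B}^T\mathbf{B}+\mathbf{C}^T\mathbf{C}$ (invertible; the Neumann velocity Laplacian). Let $D=\operatorname{diag}(1,0,\dots,0,1)\in\mathbb{R}^{n\times n}$ and let $\mathbf{I}_\sim=\begin{bmatrix}D\otimes I_{n-1} & 0\\ 0 & I_{n-1}\otimes D\end{bmatrix}\in\mathbb{R}^{2n(n-1)\times 2n(n-1)}$, a diagonal $0/1$ matrix of rank $r=4(n-1)$. Let $\mathbf{U}\in\mathbb{R}^{r\times 2n(n-1)}$ be the selection matrix whose rows are the standard basis row vectors $e_j^T$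 for the indices $j$ with $(\mathbf{I}_\sim)_{jj}=1$, so that $\mathbf{U}^T\mathbf{U}=\mathbf{I}_\sim$ and $\mathbf{U}\mathbf{U}^T=I_r$. The Dirichlet velocity Laplacian is $\mathbf{A_D}=\mathbf{A_N}+\frac{2}{h^2}\mathbf{I}_\sim$. The superscript $\dagger$ denotes the Moore–Penrose pseudoinverse. *)

From HB Require Import structures.
From mathcomp Require Import all_boot all_order all_algebra.
From Stdlib Require Import ClassicalEpsilon.
Set Implicit Arguments. Unset Strict Implicit. Unset Printing Implicit Defensive.
Import Order.TTheory GRing.Theory Num.Theory.
Local Open Scope ring_scope.

Section Defs.
Variable R : realFieldType.

(* Kronecker product: (A ⊗ B)[a*m2 + c, b*n2 + d] = A[a,b] * B[c,d]. *)
Definition kron m1 n1 m2 n2 (A : 'M[R]_(m1, n1)) (B : 'M[R]_(m2, n2))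
  : 'M[R]_(m1 * m2, n1 * n2) :=
  \matrix_(i < m1 * m2, j < n1 * n2)
    \sum_(a < m1) \sum_(c < m2) \sum_(b < n1) \sum_(d < n2)
      (((i : nat) == a * m2 + c)%N && ((j : nat) == b * n2 + d)%N)%:R
        * A a b * B c d.

Definition penrose m n (A : 'M[R]_(m, n)) (X : 'M[R]_(n, m)) : Prop :=
  [/\ A *m X *m A = A, X *m A *m X = X,
      (A *m X)^T = A *m X & (X *m A)^T = X *m A].

Definition pinv m n (A : 'M[R]_(m, n)) : 'M[R]_(n, m) :=
  epsilon (inhabits 0) (penrose A).

Definition Mdiff n : 'M[R]_(n, n.-1) :=
  \matrix_(i < n, j < n.-1)
    (if (i : nat) == j then 1 else if (i : nat) == j.+1 then -1 else 0).

Definition hh n : R := (n%:R)^-1.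

Definition Bmat n : 'M[R]_(n, n.-1) := (hh n)^-1 *: Mdiff n.

Definition Dmat n : 'M[R]_n :=
  \matrix_(i < n, j < n)
    (((i : nat) == j) && (((i : nat) == 0)%N || ((i : nat) == n.-1)))%:R.

(* velocity unknowns: u-block indexed by I_n ⊗ (n-1), v-block by (n-1) ⊗ I_n *)
Definition Nv n := (n * n.-1 + n * n.-1)%N.

Definition castc n p (A : 'M[R]_(p, n.-1 * n)) : 'M[R]_(p, n * n.-1) :=
  castmx (erefl p, mulnC n.-1 n) A.
Definition castsq n (A : 'M[R]_(n.-1 * n)) : 'M[R]_(n * n.-1) :=
  castmx (mulnC n.-1 n, mulnC n.-1 n) A.

Definition Bux n : 'M[R]_(n * n, n * n.-1) := kron (1%:M : 'M[R]_n) (Bmat n).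
Definition Bvy n : 'M[R]_(n * n, n.-1 * n) := kron (Bmat n) (1%:M : 'M[R]_n).
Definition Bqx n : 'M[R]_(n.-1 * n, n.-1 * n.-1) :=
  kron (1%:M : 'M[R]_n.-1) (Bmat n).
Definition Bqy n : 'M[R]_(n * n.-1, n.-1 * n.-1) :=
  kron (Bmat n) (1%:M : 'M[R]_n.-1).

Definition BB n : 'M[R]_(n * n, Nv n) := row_mx (- Bux n) (castc (- Bvy n)).
Definition CC n : 'M[R]_(n.-1 * n.-1, Nv n) :=
  row_mx (- (Bqy n)^T) (castc (Bqx n)^T).

Definition AN n : 'M[R]_(Nv n) := (BB n)^T *m BB n + (CC n)^T *m CC n.

Definition Isim n : 'M[R]_(Nv n) :=
  block_mx (kron (Dmat n) (1%:M : 'M[R]_n.-1)) 0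
           0 (castsq (kron (1%:M : 'M[R]_n.-1) (Dmat n))).

Definition AD n : 'M[R]_(Nv n) := AN n + (2 / (hh n ^+ 2)) *: Isim n.

Definition Jset n : {set 'I_(Nv n)} := [set j | Isim n j j == 1].

Definition Usel n : 'M[R]_(#|Jset n|, Nv n) :=
  \matrix_(i < #|Jset n|, j < Nv n) (enum_val i == j)%:R.

Definition SN n : 'M[R]_(n * n) := BB n *m invmx (AN n) *m (BB n)^T.
Definition SD n : 'M[R]_(n * n) := BB n *m invmx (AD n) *m (BB n)^T.

Definition K1 n : 'M[R]_(#|Jset n|) :=
  Usel n *m ((hh n ^+ 2 / 2) *: 1%:M + pinv ((BB n)^T *m BB n)
             + pinv ((CC n)^T *m CC n)) *m (Usel n)^T.
Definition K2 n : 'M[R]_(#|Jset n|) :=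
  Usel n *m ((hh n ^+ 2 / 2) *: 1%:M + pinv ((CC n)^T *m CC n)) *m (Usel n)^T.

Definition UBd n : 'M[R]_(#|Jset n|, n * n) := Usel n *m pinv (BB n).
End Defs.

From mathcomp Require Import all_boot all_order all_algebra.
From Stdlib Require Import ClassicalEpsilon.
From mathcomp Require Import lra zify ring.
Import Order.TTheory GRing.Theory Num.Theory.
Local Open Scope ring_scope.
Set Implicit Arguments. Unset Strict Implicit. Unset Printing Implicit Defensive.

(* With G := B^T B and H := C^T C, the discrete identity B C^T = 0 gives
   G H = H G = 0, so A_N = G + H and A_N^-1 commutes with G and H.  Hence
   G^+ = A_N^-1 G A_N^-1, H^+ = A_N^-1 H A_N^-1, B^+ = A_N^-1 B^T, and
   S_N = B A_N^-1 B^T is an orthogonal projection.  Since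
   A_D = A_N + (2/h^2) U^T U, the Woodbury identity gives
   S_D = S_N - W^T K1^-1 W with W = U B^+; as W W^T = K1 - K2, the matrix
   S_N + W^T K2^-1 W satisfies the Penrose equations for S_D.  Finally K1 and
   K2 are (h^2/2) I plus Gram matrices, hence positive definite. *)

Section MoorePenrose.
Variable R : realFieldType.

Lemma penrose_uniq m n (A : 'M[R]_(m, n)) X Y : penrose A X -> penrose A Y -> X = Y.
Proof.
case=> AXA XAX sAX sXA [AYA YAY sAY sYA].
have trA_AY : A^T = A^T *m (A *m Y) by rewrite -sAY -trmx_mul AYA.
have trA_XA : A^T = X *m A *m A^T by rewrite -sXA -trmx_mul mulmxA AXA.
have X_XAY : X = X *m A *m Y.
  have -> : X *m A *m Y = X *m (X^T *m A^T) *m A *m Y.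
    by rewrite -trmx_mul sAX !mulmxA XAX.
  transitivity (X *m (X^T *m (A^T *m (A *m Y)))).
    by rewrite -trA_AY -trmx_mul sAX mulmxA XAX.
  by rewrite !mulmxA.
have Y_XAY : Y = X *m A *m Y.
  have -> : X *m A *m Y = X *m A *m (A^T *m Y^T) *m Y.
    by rewrite -trmx_mul sYA -[X *m A *m (Y *m A) *m Y]mulmxA YAY.
  transitivity (X *m A *m A^T *m (Y^T *m Y)).
    by rewrite -trA_XA mulmxA -trmx_mul sYA YAY.
  by rewrite !mulmxA.
by rewrite X_XAY -Y_XAY.
Qed.

Lemma pinvE m n (A : 'M[R]_(m, n)) X : penrose A X -> pinv A = X.
Proof.
move=> AX; apply: (penrose_uniq _ AX).
by apply: (epsilon_spec (inhabits 0) (penrose A)); exists X.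
Qed.

Lemma pinv_sym_idem n (P : 'M[R]_n) : P^T = P -> P *m P = P -> pinv P = P.
Proof. by move=> sP PP; apply: pinvE; split; rewrite ?PP ?sP. Qed.

Lemma pinv_gram p N (M : 'M[R]_(p, N)) (Ai : 'M[R]_N) :
  Ai^T = Ai -> M *m Ai *m (M^T *m M) = M ->
  Ai *m (M^T *m M) = (M^T *m M) *m Ai ->
  pinv (M^T *m M) = Ai *m (M^T *m M) *m Ai.
Proof.
set G := M^T *m M => sAi MAiG GAi.
have sG : G^T = G by rewrite /G trmx_mul trmxK.
have GAiG : G *m Ai *m G = G.
  by transitivity (M^T *m (M *m Ai *m G)); [rewrite /G !mulmxA | rewrite MAiG].
clearbody G.
have GAiGl k (X : 'M_(k, N)) : X *m G *m Ai *m G = X *m G.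
  by rewrite -2!mulmxA (mulmxA G) GAiG.
apply: pinvE; split.
- by rewrite !mulmxA ?GAiGl ?GAiG.
- by rewrite !mulmxA ?GAiGl.
- by rewrite !mulmxA ?GAiG trmx_mul sAi sG GAi.
- by rewrite ?GAiGl trmx_mul sAi sG GAi.
Qed.

(* The two updates [V1], [V2] satisfy [V1 V2 = V2 V1 = V2 - V1], so
   [P - V1] and [P + V2] are mutually inverse on the range of [P]. *)
Lemma penrose_proj_update n r (P : 'M[R]_n) (W : 'M[R]_(r, n)) (K1 K2 : 'M[R]_r) :
  K1 \in unitmx -> K2 \in unitmx -> P^T = P -> P *m P = P -> P *m W^T = W^T ->
  W *m W^T = K1 - K2 ->
  penrose (P - W^T *m invmx K1 *m W) (P + W^T *m invmx K2 *m W).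
Proof.
move=> uK1 uK2 sP PP PWt WWt.
have WP : W *m P = W by rewrite -[W]trmxK -sP -trmx_mul PWt.
set V1 := W^T *m invmx K1 *m W; set V2 := W^T *m invmx K2 *m W.
have PV1 : P *m V1 = V1 by rewrite /V1 !mulmxA PWt.
have PV2 : P *m V2 = V2 by rewrite /V2 !mulmxA PWt.
have V1P : V1 *m P = V1 by rewrite /V1 -mulmxA WP.
have V2P : V2 *m P = V2 by rewrite /V2 -mulmxA WP.
have V1V2 : V1 *m V2 = V2 - V1.
  have -> : V1 *m V2 = W^T *m (invmx K1 *m (W *m W^T) *m invmx K2) *m W.
    by rewrite /V1 /V2 !mulmxA.
  rewrite WWt mulmxBr mulmxBl (mulVmx uK1) mul1mx -(mulmxA (invmx K1) K2).
  by rewrite (mulmxV uK2) mulmx1 mulmxBr mulmxBl.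
have V2V1 : V2 *m V1 = V2 - V1.
  have -> : V2 *m V1 = W^T *m (invmx K2 *m (W *m W^T) *m invmx K1) *m W.
    by rewrite /V1 /V2 !mulmxA.
  rewrite WWt mulmxBr mulmxBl -(mulmxA (invmx K2) K1) (mulmxV uK1) mulmx1.
  by rewrite (mulVmx uK2) mul1mx mulmxBr mulmxBl.
have AX : (P - V1) *m (P + V2) = P.
  rewrite mulmxBl !mulmxDr PP PV2 V1P V1V2.
  by rewrite [V1 + _]addrC subrK addrK.
have XA : (P + V2) *m (P - V1) = P.
  rewrite mulmxDl !mulmxBr PP PV1 V2P V2V1.
  by rewrite opprB [V2 + _]addrC subrK subrK.
split.
- by rewrite AX mulmxBr PP PV1.
- by rewrite XA mulmxDr PP PV2.
- by rewrite AX sP.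
- by rewrite XA sP.
Qed.

End MoorePenrose.

Section PositiveDefinite.
Variable R : realFieldType.

Definition sqnorm k (y : 'rV[R]_k) : R := (y *m y^T) 0 0.

Lemma sqnormE k (y : 'rV[R]_k) : sqnorm y = \sum_i y 0 i ^+ 2.
Proof. by rewrite /sqnorm mxE; apply: eq_bigr => i _; rewrite mxE expr2. Qed.

Lemma sqnorm_ge0 k (y : 'rV[R]_k) : 0 <= sqnorm y.
Proof. by rewrite sqnormE; apply: sumr_ge0 => i _; apply: sqr_ge0. Qed.

Lemma sqnorm_eq0 k (y : 'rV[R]_k) : sqnorm y = 0 -> y = 0.
Proof.
rewrite sqnormE => y0; apply/rowP => i; rewrite mxE.
have /eqP := psumr_eq0P (fun i _ => sqr_ge0 (y 0 i)) y0 (i := i) isT.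
by rewrite sqrf_eq0 => /eqP.
Qed.

Lemma addmxE m n (A B : 'M[R]_(m, n)) i j : (A + B) i j = A i j + B i j.
Proof. by rewrite mxE. Qed.

Lemma trmx_gram m n (M : 'M[R]_(m, n)) : (M^T *m M)^T = M^T *m M.
Proof. by rewrite trmx_mul trmxK. Qed.

Lemma gram_form k p (x : 'rV[R]_k) (M : 'M[R]_(p, k)) :
  (x *m (M^T *m M) *m x^T) 0 0 = sqnorm (x *m M^T).
Proof. by rewrite /sqnorm trmx_mul trmxK !mulmxA. Qed.

Lemma unitmx_ker0 k (K : 'M[R]_k) : (forall x : 'rV_k, x *m K = 0 -> x = 0) ->
  K \in unitmx.
Proof.
move=> K_inj; rewrite -row_free_unit -kermx_eq0; apply/eqP/row_matrixP => i.
by rewrite row0; apply: K_inj; rewrite -row_mul mulmx_ker row0.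
Qed.

Lemma quad_form_ker k (K : 'M[R]_k) (x : 'rV_k) :
  x *m K = 0 -> (x *m K *m x^T) 0 0 = 0.
Proof. by move->; rewrite mul0mx mxE. Qed.

Lemma scalar_add_gram_unit k p1 p2 (a : R) (M1 : 'M[R]_(p1, k)) (M2 : 'M[R]_(p2, k)) :
  0 < a -> a *: 1%:M + M1^T *m M1 + M2^T *m M2 \in unitmx.
Proof.
move=> a_gt0; apply: unitmx_ker0 => x /quad_form_ker.
rewrite !mulmxDr !mulmxDl !addmxE !gram_form.
rewrite scalemx1 mul_mx_scalar -scalemxAl mxE -/(sqnorm x) => form0.
have := sqnorm_ge0 x; have := sqnorm_ge0 (x *m M1^T); have := sqnorm_ge0 (x *m M2^T).
by move=> *; apply: sqnorm_eq0; nra.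
Qed.

Lemma add_gram_unit k p1 p2 (M1 : 'M[R]_(p1, k)) (M2 : 'M[R]_(p2, k)) :
  (forall x : 'rV_k, x *m M1^T = 0 -> x = 0) -> M1^T *m M1 + M2^T *m M2 \in unitmx.
Proof.
move=> M1t_inj; apply: unitmx_ker0 => x /quad_form_ker.
rewrite !mulmxDr !mulmxDl addmxE !gram_form => form0.
have := sqnorm_ge0 (x *m M1^T); have := sqnorm_ge0 (x *m M2^T).
by move=> *; apply/M1t_inj/sqnorm_eq0; lra.
Qed.

End PositiveDefinite.

Section Woodbury.
Variable R : realFieldType.

Lemma invmx_comm k (A M : 'M[R]_k) : A \in unitmx -> A *m M = M *m A ->
  invmx A *m M = M *m invmx A.
Proof.
move=> uA AM.
rewrite -[invmx A *m M]mulmx1 -(mulmxV uA) mulmxA -(mulmxA (invmx A)) -AM.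
by rewrite mulmxA (mulVmx uA) mul1mx.
Qed.

Lemma invmx_eq k (A X : 'M[R]_k) : A *m X = 1%:M -> invmx A = X.
Proof.
move=> AX; have [uA _] := mulmx1_unit AX.
by rewrite -[invmx A]mulmx1 -AX mulmxA mulVmx // mul1mx.
Qed.

Lemma woodbury k r (A : 'M[R]_k) (U : 'M[R]_(r, k)) (a c : R) :
  A \in unitmx -> c * a = 1 -> a *: 1%:M + U *m invmx A *m U^T \in unitmx ->
  invmx (A + c *: (U^T *m U)) = invmx A -
    invmx A *m U^T *m invmx (a *: 1%:M + U *m invmx A *m U^T) *m U *m invmx A.
Proof.
set K := _ + _ *m _ *m _ => uA ca uK; apply: invmx_eq; rewrite mulmxDl.
have UAiU : U *m invmx A *m U^T = K - a *: 1%:M by rewrite /K addrC addKr.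
set Y := U^T *m invmx K *m U *m invmx A.
have AX : A *m (invmx A - invmx A *m U^T *m invmx K *m U *m invmx A) = 1%:M - Y.
  by rewrite mulmxBr mulmxV // !mulmxA mulmxV // mul1mx.
have UUX : c *: (U^T *m U) *m (invmx A - invmx A *m U^T *m invmx K *m U *m invmx A) = Y.
  rewrite -scalemxAl mulmxBr.
  have -> : U^T *m U *m (invmx A *m U^T *m invmx K *m U *m invmx A)
      = U^T *m (U *m invmx A *m U^T) *m invmx K *m U *m invmx A by rewrite !mulmxA.
  rewrite UAiU mulmxBr mulmxBl -(mulmxA U^T K) mulmxV // mulmx1.
  rewrite scalemx1 mul_mx_scalar !mulmxBl -!scalemxAl -/Y.
  by rewrite opprB addrC subrK scalerA ca scale1r.
by rewrite AX UUX subrK.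
Qed.

Lemma conj_scalar_add k (x : R) N (M : 'M[R]_N) (V : 'M[R]_(k, N)) :
  V *m V^T = 1%:M -> V *m (x *: 1%:M + M) *m V^T = x *: 1%:M + V *m M *m V^T.
Proof.
move=> VVt1; rewrite mulmxDr mulmxDl scalemx1 mul_mx_scalar -scalemxAl.
by rewrite VVt1 scalemx1.
Qed.

End Woodbury.

Section OrthogonalGramSum.
Variables (R : realFieldType) (p1 p2 N : nat).
Variables (M1 : 'M[R]_(p1, N)) (M2 : 'M[R]_(p2, N)).
Hypothesis M1M2t0 : M1 *m M2^T = 0.
Hypothesis gram_sum_unit : M1^T *m M1 + M2^T *m M2 \in unitmx.

Local Notation G1 := (M1^T *m M1).
Local Notation G2 := (M2^T *m M2).
Local Notation Ai := (invmx (G1 + G2)).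

Lemma trmx_inv_gram_sum : Ai^T = Ai.
Proof. by rewrite trmx_inv linearD /= !trmx_gram. Qed.

Lemma gram_orth : G1 *m G2 = 0 /\ G2 *m G1 = 0.
Proof.
have M2M1t0 : M2 *m M1^T = 0 by rewrite -[M2]trmxK -trmx_mul M1M2t0 trmx0.
split; first by rewrite -mulmxA (mulmxA M1) M1M2t0 mul0mx mulmx0.
by rewrite -mulmxA (mulmxA M2) M2M1t0 mul0mx mulmx0.
Qed.

Lemma inv_gram_sum_comm : Ai *m G1 = G1 *m Ai /\ Ai *m G2 = G2 *m Ai.
Proof.
have [G12 G21] := gram_orth.
by split; apply: invmx_comm => //; rewrite mulmxDl mulmxDr G12 G21.
Qed.

Lemma mul_inv_gram_sum : M1 *m Ai *m G1 = M1.
Proof.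
have M1G2 : M1 *m G2 = 0 by rewrite mulmxA M1M2t0 mul0mx.
have [_ AiG2] := inv_gram_sum_comm.
rewrite -mulmxA -[RHS]mulmx1 -(mulVmx gram_sum_unit) !mulmxDr AiG2.
by rewrite (mulmxA M1 G2) M1G2 mul0mx addr0.
Qed.

Lemma pinv_gram_part : pinv G1 = Ai *m G1 *m Ai.
Proof.
exact: pinv_gram trmx_inv_gram_sum mul_inv_gram_sum inv_gram_sum_comm.1.
Qed.

Lemma pinv_orth_part : pinv M1 = Ai *m M1^T.
Proof.
have G1AiM1t : G1 *m Ai *m M1^T = M1^T.
  rewrite -[RHS](congr1 trmx mul_inv_gram_sum).
  by rewrite !trmx_mul trmxK trmx_inv_gram_sum mulmxA.
apply: pinvE; split.
- by rewrite !mulmxA -(mulmxA _ M1^T M1) mul_inv_gram_sum.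
- by rewrite -!mulmxA (mulmxA M1^T) (mulmxA G1) G1AiM1t.
- by rewrite !trmx_mul trmxK trmx_inv_gram_sum mulmxA.
- by rewrite -mulmxA trmx_mul trmx_gram trmx_inv_gram_sum inv_gram_sum_comm.1.
Qed.

End OrthogonalGramSum.

Section DirichletSchurComplement.
Variables (R : realFieldType) (p q r N : nat).
Variables (B : 'M[R]_(p, N)) (C : 'M[R]_(q, N)) (U : 'M[R]_(r, N)) (a c : R).
Hypothesis gram_sum_unit : B^T *m B + C^T *m C \in unitmx.
Hypothesis BCt0 : B *m C^T = 0.
Hypothesis UUt1 : U *m U^T = 1%:M.
Hypothesis ca1 : c * a = 1.
Hypothesis a_gt0 : 0 < a.

Local Notation G := (B^T *m B).
Local Notation H := (C^T *m C).
Local Notation Ai := (invmx (G + H)).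
Local Notation K1 := (U *m (a *: 1%:M + pinv G + pinv H) *m U^T).
Local Notation K2 := (U *m (a *: 1%:M + pinv H) *m U^T).

Let CBt0 : C *m B^T = 0.
Proof. by rewrite -[C]trmxK -trmx_mul BCt0 trmx0. Qed.

Let HG_unit : H + G \in unitmx.
Proof. by rewrite addrC. Qed.

Lemma pinv_gram_parts : pinv G = Ai *m G *m Ai /\ pinv H = Ai *m H *m Ai.
Proof.
split; first exact: pinv_gram_part BCt0 gram_sum_unit.
by rewrite (pinv_gram_part CBt0 HG_unit) addrC.
Qed.

Lemma inv_gram_sum_split : Ai *m G *m Ai + Ai *m H *m Ai = Ai.
Proof. by rewrite -mulmxDl -mulmxDr mulVmx // mul1mx. Qed.

Lemma K1_add_grams : K1 = a *: 1%:M + (B *m Ai *m U^T)^T *m (B *m Ai *m U^T)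
                 + (C *m Ai *m U^T)^T *m (C *m Ai *m U^T).
Proof.
have [-> ->] := pinv_gram_parts.
rewrite -addrA inv_gram_sum_split conj_scalar_add // -addrA; congr (_ + _).
rewrite !trmx_mul !trmxK trmx_inv_gram_sum -{1}inv_gram_sum_split.
by rewrite mulmxDr mulmxDl !mulmxA.
Qed.

Lemma K2_add_grams : K2 = a *: 1%:M + (C *m Ai *m U^T)^T *m (C *m Ai *m U^T)
                 + (0 : 'M_(1, r))^T *m 0.
Proof.
have [_ ->] := pinv_gram_parts.
rewrite trmx0 mulmx0 addr0 conj_scalar_add //; congr (_ + _).
by rewrite !trmx_mul !trmxK trmx_inv_gram_sum !mulmxA.
Qed.

Lemma K1_unit : K1 \in unitmx.
Proof. by rewrite K1_add_grams; apply: scalar_add_gram_unit. Qed.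

Lemma K2_unit : K2 \in unitmx.
Proof. by rewrite K2_add_grams; apply: scalar_add_gram_unit. Qed.

Lemma inv_gram_sum_add_scaled : invmx (G + H + c *: (U^T *m U)) =
  Ai - Ai *m U^T *m invmx K1 *m U *m Ai.
Proof.
have K1_Ai : K1 = a *: 1%:M + U *m Ai *m U^T.
  have [-> ->] := pinv_gram_parts.
  by rewrite -addrA inv_gram_sum_split conj_scalar_add.
by rewrite K1_Ai (woodbury gram_sum_unit ca1) // -K1_Ai K1_unit.
Qed.

Local Notation P := (B *m Ai *m B^T).
Local Notation W := (U *m pinv B).

Lemma trmx_W : W^T = B *m Ai *m U^T.
Proof.
by rewrite (pinv_orth_part BCt0 gram_sum_unit) !trmx_mul trmxK trmx_inv_gram_sum.
Qed.

Lemma proj_fix k (X : 'M[R]_(N, k)) : P *m (B *m X) = B *m X.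
Proof.
by rewrite !mulmxA -(mulmxA (B *m Ai)) (mul_inv_gram_sum BCt0 gram_sum_unit).
Qed.

Lemma proj_sym : P^T = P.
Proof. by rewrite !trmx_mul trmxK trmx_inv_gram_sum mulmxA. Qed.

Lemma proj_idem : P *m P = P.
Proof. by rewrite -[X in _ *m X]mulmxA proj_fix mulmxA. Qed.

Lemma schur_dirichlet_update :
  B *m invmx (G + H + c *: (U^T *m U)) *m B^T = P - W^T *m invmx K1 *m W.
Proof.
rewrite inv_gram_sum_add_scaled trmx_W (pinv_orth_part BCt0 gram_sum_unit).
by rewrite mulmxBr mulmxBl !mulmxA.
Qed.

Lemma W_gram : W *m W^T = K1 - K2.
Proof.
have [-> ->] := pinv_gram_parts.
rewrite -mulmxBl -mulmxBr trmx_W (pinv_orth_part BCt0 gram_sum_unit).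
have -> : a *: 1%:M + Ai *m G *m Ai + Ai *m H *m Ai - (a *: 1%:M + Ai *m H *m Ai)
    = Ai *m G *m Ai by rewrite addrAC opprD addrACA subrr add0r subrK.
by rewrite !mulmxA.
Qed.

Lemma schur_dirichlet :
  [/\ K1 \in unitmx, K2 \in unitmx,
      B *m invmx (G + H + c *: (U^T *m U)) *m B^T =
        B *m invmx (G + H) *m B^T - W^T *m invmx K1 *m W
    & pinv (B *m invmx (G + H + c *: (U^T *m U)) *m B^T) =
      pinv (B *m invmx (G + H) *m B^T) + W^T *m invmx K2 *m W].
Proof.
split; [exact: K1_unit | exact: K2_unit | exact: schur_dirichlet_update |].
rewrite schur_dirichlet_update (pinv_sym_idem proj_sym proj_idem).
apply: pinvE; apply: penrose_proj_update K1_unit K2_unit proj_sym proj_idem _ W_gram.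
by rewrite trmx_W -(mulmxA B Ai U^T) proj_fix.
Qed.

End DirichletSchurComplement.

Section KronIndex.
Variables m1 m2 : nat.

Lemma kron_idx_proof (a : 'I_m1) (c : 'I_m2) : (a * m2 + c < m1 * m2)%N.
Proof. by have := ltn_ord a; have := ltn_ord c; nia. Qed.

Definition kron_idx (ac : 'I_m1 * 'I_m2) : 'I_(m1 * m2) :=
  Ordinal (kron_idx_proof ac.1 ac.2).

Lemma kron_idx_gt0 (i : 'I_(m1 * m2)) : (0 < m2)%N.
Proof. by case: m2 i => [|//] [i]; rewrite muln0. Qed.

Lemma kron_idx_divP (i : 'I_(m1 * m2)) : (i %/ m2 < m1)%N.
Proof. by rewrite ltn_divLR ?(kron_idx_gt0 i). Qed.

Lemma kron_idx_modP (i : 'I_(m1 * m2)) : (i %% m2 < m2)%N.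
Proof. by rewrite ltn_pmod ?(kron_idx_gt0 i). Qed.

Definition kron_idx_inv (i : 'I_(m1 * m2)) : 'I_m1 * 'I_m2 :=
  (Ordinal (kron_idx_divP i), Ordinal (kron_idx_modP i)).

Lemma kron_idxK : cancel kron_idx kron_idx_inv.
Proof.
move=> [a c]; have m2_gt0 := leq_ltn_trans (leq0n _) (ltn_ord c).
congr pair; apply: val_inj => /=.
- by rewrite divnMDl // divn_small // addn0.
- by rewrite modnMDl modn_small.
Qed.

Lemma kron_idx_invK : cancel kron_idx_inv kron_idx.
Proof. by move=> i; apply: val_inj => /=; rewrite -divn_eq. Qed.

Lemma kron_idxP (i : 'I_(m1 * m2)) : exists a c, i = kron_idx (a, c).
Proof.
exists (kron_idx_inv i).1, (kron_idx_inv i).2.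
by rewrite -surjective_pairing kron_idx_invK.
Qed.

Lemma kron_idx_eq a a' c c' :
  (kron_idx (a, c) == kron_idx (a', c')) = (a == a') && (c == c').
Proof. by rewrite (inj_eq (can_inj kron_idxK)) xpair_eqE. Qed.

Lemma eqn_kron_idx (i : 'I_(m1 * m2)) (a : 'I_m1) (c : 'I_m2) :
  ((i : nat) == a * m2 + c)%N = (i == kron_idx (a, c)).
Proof. by []. Qed.

End KronIndex.

Section Kron.
Variable R : realFieldType.

Lemma sum_delta (T : finType) (y : T) (F : T -> R) : \sum_x (y == x)%:R * F x = F y.
Proof.
rewrite (bigD1 y) //= eqxx mul1r big1 ?addr0 // => x; rewrite eq_sym => /negbTE ->.
by rewrite mul0r.
Qed.

Lemma sum_kron_idx m1 m2 (F : 'I_(m1 * m2) -> R) :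
  \sum_i F i = \sum_(a < m1) \sum_(c < m2) F (kron_idx (a, c)).
Proof.
rewrite pair_big /= (reindex (@kron_idx m1 m2)) //.
by exists (@kron_idx_inv m1 m2) => i _; [exact: kron_idxK | exact: kron_idx_invK].
Qed.

Lemma kronE m1 n1 m2 n2 (A : 'M[R]_(m1, n1)) (B : 'M[R]_(m2, n2)) a c b d :
  kron A B (kron_idx (a, c)) (kron_idx (b, d)) = A a b * B c d.
Proof.
have term (a' : 'I_m1) (c' : 'I_m2) (b' : 'I_n1) (d' : 'I_n2) :
    (((kron_idx (a, c) : nat) == a' * m2 + c')%N
      && ((kron_idx (b, d) : nat) == b' * n2 + d')%N)%:R * A a' b' * B c' d'
    = (d == d')%:R * ((b == b')%:R *
        ((c == c')%:R * ((a == a')%:R * (A a' b' * B c' d')))).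
  rewrite !eqn_kron_idx !kron_idx_eq.
  by case: (a == a'); case: (c == c'); case: (b == b'); case: (d == d');
    rewrite /= ?mul0r ?mul1r ?mulr0 ?mulr1.
rewrite mxE.
under eq_bigr => a' _ do under eq_bigr => c' _ do under eq_bigr => b' _ do
  under eq_bigr => d' _ do rewrite term.
under eq_bigr => a' _ do under eq_bigr => c' _ do under eq_bigr => b' _ do
  rewrite sum_delta.
under eq_bigr => a' _ do under eq_bigr => c' _ do rewrite sum_delta.
under eq_bigr => a' _ do rewrite sum_delta.
by rewrite sum_delta.
Qed.

Lemma mul_kron m1 n1 p1 m2 n2 p2 (A : 'M[R]_(m1, n1)) (B : 'M[R]_(m2, n2))
  (C : 'M[R]_(n1, p1)) (D : 'M[R]_(n2, p2)) :
  kron A B *m kron C D = kron (A *m C) (B *m D).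
Proof.
apply/matrixP => i j.
have [a [c ->]] := kron_idxP i; have [e [f ->]] := kron_idxP j.
rewrite mxE kronE !mxE sum_kron_idx.
under eq_bigr => b _ do under eq_bigr => d _ do rewrite !kronE.
rewrite mulr_suml; apply: eq_bigr => b _; rewrite mulr_sumr; apply: eq_bigr => d _.
ring.
Qed.

Lemma trmx_kron m1 n1 m2 n2 (A : 'M[R]_(m1, n1)) (B : 'M[R]_(m2, n2)) :
  (kron A B)^T = kron A^T B^T.
Proof.
apply/matrixP => i j.
have [a [c ->]] := kron_idxP i; have [e [f ->]] := kron_idxP j.
by rewrite mxE !kronE !mxE.
Qed.

Lemma kron1 m1 m2 : kron (1%:M : 'M[R]_m1) (1%:M : 'M[R]_m2) = 1%:M.
Proof.
apply/matrixP => i j.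
have [a [c ->]] := kron_idxP i; have [e [f ->]] := kron_idxP j.
by rewrite kronE !mxE kron_idx_eq -natrM mulnb.
Qed.

End Kron.

Section Discretization.
Variable R : realFieldType.

Definition diag01 k (M : 'M[R]_k) := forall i j, M i j = ((i == j) && (M i i == 1))%:R.

Lemma natr_bool_eq1 (u : bool) : ((u%:R : R) == 1) = u.
Proof. by case: u; rewrite ?eqxx // eq_sym oner_eq0. Qed.

Lemma diag01_kron k1 k2 (D1 : 'M[R]_k1) (D2 : 'M[R]_k2) :
  diag01 D1 -> diag01 D2 -> diag01 (kron D1 D2).
Proof.
move=> D1_01 D2_01 i j.
have [a [c ->]] := kron_idxP i; have [b [d ->]] := kron_idxP j.
rewrite !kronE D1_01 D2_01 (D1_01 a a) (D2_01 c c) !eqxx /= !natr_bool_eq1.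
rewrite -natrM mulnb -natrM mulnb natr_bool_eq1 kron_idx_eq.
by case: (a == b); case: (c == d); rewrite ?andbF.
Qed.

Lemma diag01_block k1 k2 (D1 : 'M[R]_k1) (D2 : 'M[R]_k2) :
  diag01 D1 -> diag01 D2 -> diag01 (block_mx D1 0 0 D2).
Proof.
move=> D1_01 D2_01 i j.
rewrite -(splitK i) -(splitK j); case: (split i) => i'; case: (split j) => j' /=.
- by rewrite !block_mxEul eq_shift D1_01.
- by rewrite block_mxEur block_mxEul eq_shift /= mxE.
- by rewrite block_mxEdl block_mxEdr eq_shift /= mxE.
- by rewrite !block_mxEdr eq_shift D2_01.
Qed.

Lemma diag01_cast a b (e : a = b) (D : 'M[R]_a) : diag01 D -> diag01 (castmx (e, e) D).
Proof. by case: b / e; rewrite castmx_id. Qed.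

Lemma diag01_1 k : diag01 (1%:M : 'M[R]_k).
Proof. by move=> i j; rewrite !mxE eqxx natr_bool_eq1 andbT. Qed.

Lemma diag01_Dmat n : diag01 (Dmat R n).
Proof. by move=> i j; rewrite !mxE eqxx /= natr_bool_eq1. Qed.

Lemma diag01_Isim n : diag01 (Isim R n).
Proof.
apply: diag01_block; first by apply: diag01_kron; [exact: diag01_Dmat | exact: diag01_1].
apply: (@diag01_cast _ _ (mulnC n.-1 n)).
by apply: diag01_kron; [exact: diag01_1 | exact: diag01_Dmat].
Qed.

Lemma Usel_trmx n : Usel R n *m (Usel R n)^T = 1%:M.
Proof.
apply/matrixP => i i'; rewrite !mxE.
under eq_bigr => j _ do rewrite !mxE.
by rewrite sum_delta (inj_eq enum_val_inj) eq_sym.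
Qed.

Lemma trmx_Usel n : (Usel R n)^T *m Usel R n = Isim R n.
Proof.
apply/matrixP => j k; rewrite [RHS]diag01_Isim [LHS]mxE.
under eq_bigr => i _ do rewrite !mxE.
rewrite -(big_enum_val (fun x => (x == j)%:R * (x == k)%:R)) /= big_mkcond /=.
under eq_bigr => x _ do
  rewrite eq_sym -[X in if _ then _ else X](mulr0 (j == x)%:R) -fun_if.
by rewrite sum_delta inE; case: (Isim R n j j == 1); rewrite ?andbT ?andbF.
Qed.

Lemma castc_mul_tr a b (e : a = b) p p' (M : 'M[R]_(p, a)) (N : 'M[R]_(p', a)) :
  castmx (erefl p, e) M *m (castmx (erefl p', e) N)^T = M *m N^T.
Proof. by case: b / e; rewrite !castmx_id. Qed.

Lemma mulmx_castc_add a b (e : a = b) k p p' (A1 : 'M[R]_(k, p)) (M1 : 'M[R]_(p, a))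
  (A2 : 'M[R]_(k, p')) (M2 : 'M[R]_(p', a)) :
  A1 *m castmx (erefl p, e) M1 + A2 *m castmx (erefl p', e) M2
  = castmx (erefl k, e) (A1 *m M1 + A2 *m M2).
Proof. by case: b / e; rewrite !castmx_id. Qed.

Lemma castmx0 a b (e : a = b) k : castmx (erefl k, e) (0 : 'M[R]_(k, a)) = 0.
Proof. by case: b / e; rewrite castmx_id. Qed.

Lemma castc_tr_inj a b (e : a = b) k (M : 'M[R]_(k, a)) :
  (forall y : 'rV_a, y *m M^T = 0 -> y = 0) ->
  forall x : 'rV_b, x *m (castmx (erefl k, e) M)^T = 0 -> x = 0.
Proof. by case: b / e; rewrite castmx_id. Qed.

Definition cumsum_mx n : 'M[R]_(n, n.-1) := \matrix_(i < n, k < n.-1) (i <= k)%:R.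

Lemma Mdiff_cumsum n : (Mdiff R n)^T *m cumsum_mx n = 1%:M.
Proof.
apply/matrixP => j k; rewrite !mxE.
have lt_jn : (j < n)%N by have := ltn_ord j; lia.
have lt_j1n : (j.+1 < n)%N by have := ltn_ord j; lia.
rewrite (bigD1 (Ordinal lt_jn)) //= (bigD1 (Ordinal lt_j1n)) /=; last first.
  by rewrite -val_eqE /= eqn_leq ltnn.
rewrite big1 ?addr0; last first.
  move=> i; rewrite -!val_eqE /= => /andP[ne_ij ne_ij1].
  by rewrite !mxE (negbTE ne_ij) (negbTE ne_ij1) mul0r.
rewrite !mxE !eqxx /= (_ : (j.+1 == j)%N = false); last by elim: (nat_of_ord j).
rewrite mul1r mulN1r -val_eqE /=.
by rewrite leq_eqVlt; case: eqP => [->|_]; rewrite ?ltnn /= ?subr0 ?subrr.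
Qed.

Lemma Bmat_left_inv n : (0 < n)%N -> (Bmat R n)^T *m (hh R n *: cumsum_mx n) = 1%:M.
Proof.
move=> n_gt0; have hh_neq0 : hh R n != 0 by rewrite invr_eq0 pnatr_eq0 -lt0n.
rewrite /Bmat linearZ /= [(_ *: _)^T]linearZ /= -scalemxAl scalerA mulfV // scale1r.
exact: Mdiff_cumsum.
Qed.

Lemma right_inv_trN_ker0 k p (M : 'M[R]_(p, k)) (L : 'M[R]_(p, k)) :
  M^T *m L = 1%:M -> forall x : 'rV_k, x *m (- M)^T = 0 -> x = 0.
Proof.
move=> MtL x; rewrite linearN /= mulmxN => /eqP; rewrite oppr_eq0 => /eqP xMt0.
by rewrite -[x]mulmx1 -MtL mulmxA xMt0 mul0mx.
Qed.

Lemma Bux_right_inv n : (0 < n)%N ->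
  (Bux R n)^T *m kron (1%:M : 'M_n) (hh R n *: cumsum_mx n) = 1%:M.
Proof.
by move=> n_gt0; rewrite trmx_kron trmx1 mul_kron mul1mx Bmat_left_inv // kron1.
Qed.

Lemma Bvy_right_inv n : (0 < n)%N ->
  (Bvy R n)^T *m kron (hh R n *: cumsum_mx n) (1%:M : 'M_n) = 1%:M.
Proof.
by move=> n_gt0; rewrite trmx_kron trmx1 mul_kron mul1mx Bmat_left_inv // kron1.
Qed.

Lemma BB_CC_orth n : BB R n *m (CC R n)^T = 0.
Proof.
rewrite /BB /CC tr_row_mx mul_row_col /castc castc_mul_tr !trmxK linearN /= trmxK.
rewrite mulNmx mulmxN opprK mulNmx /Bux /Bvy /Bqy /Bqx !mul_kron !mul1mx !mulmx1.
by rewrite subrr.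
Qed.

(* The off-diagonal blocks of [A_N] cancel: by the mixed-product rule both of
   their terms reduce to [kron Bmat Bmat^T]. *)
Lemma AN_unit n : (0 < n)%N -> AN R n \in unitmx.
Proof.
move=> n_gt0; rewrite /AN /BB /CC !tr_row_mx !mul_col_row add_block_mx.
rewrite [X in block_mx _ X _ _](_ : _ = 0); last first.
  rewrite /castc mulmx_castc_add !linearN /= !trmxK ?mulNmx ?mulmxN ?opprK.
  rewrite /Bux /Bvy /Bqy /Bqx !trmx_kron !trmx1 !mul_kron !mul1mx !mulmx1 subrr.
  exact: castmx0.
rewrite unitmxE det_lblock unitrM -!unitmxE; apply/andP; split.
- exact/add_gram_unit/right_inv_trN_ker0/Bux_right_inv.
- apply/add_gram_unit/castc_tr_inj.
  exact/right_inv_trN_ker0/Bvy_right_inv.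
Qed.

End Discretization.

Theorem theorem2 (R : realFieldType) (n : nat) (hn : (2 <= n)%N) :
  [/\ K1 R n \in unitmx, K2 R n \in unitmx,
      SD R n = SN R n - (UBd R n)^T *m invmx (K1 R n) *m UBd R n
    & pinv (SD R n) = pinv (SN R n) + (UBd R n)^T *m invmx (K2 R n) *m UBd R n].
Proof.
have n_gt0 : (0 < n)%N by apply: leq_trans hn.
have hh_gt0 : 0 < hh R n by rewrite invr_gt0 ltr0n.
have a_gt0 : 0 < hh R n ^+ 2 / 2 by rewrite divr_gt0 ?exprn_gt0 ?ltr0n.
have ca1 : 2 / hh R n ^+ 2 * (hh R n ^+ 2 / 2) = 1.
  by move: (lt0r_neq0 hh_gt0) => hh_neq0; field.
have := schur_dirichlet (AN_unit R n_gt0) (BB_CC_orth R n) (Usel_trmx R n) ca1 a_gt0.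
by rewrite /K1 /K2 /SD /SN /AD /AN /UBd -(trmx_Usel R n).
Qed.
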